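(* Let $G_1$ and $G_2$ be graphs with a common vertex set $V$ (of size $n$), let $\{V_1,\dots,V_m\}$ be a partition of $V$, and suppose there is a unital $C^*$-algebra $\mathcal{A}$ and a quantum permutation matrix $u\in M_n(\mathcal{A})$ with $uA_{G_1}=A_{G_2}u$ that is block diagonal with respect to $\{V_1,\dots,V_m\}$, i.e. $u_{ab}=0$ whenever $a$ and $b$ lie in different parts. Let $\{S_1,\dots,S_{k+1}\}$ be a partition of $\{1,\dots,m\}$ and define the partition $\pi=\{C_1,\dots,C_k,D\}$ of $V$ by $C_i:=\bigcup_{s\in S_i}V_s$ ($1\le i\le k$) and $D:=\bigcup_{s\in S_{k+1}}V_s$. If both $G_1$ and $G_2$ satisfy the Godsil–McKay conditions (i) and (ii) with respect to $\pi$, then the switched graphs $G_1^{\pi,D}$ and $G_2^{\pi,D}$ are quantum isomorphic.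
   Context: A quantum permutation matrix over a unital $C^*$-algebra $\mathcal{A}$ is $u=(u_{ij})\in M_n(\mathcal{A})$ with $u_{ij}=u_{ij}^*=u_{ij}^2$ and $\sum_ku_{ik}=1=\sum_ku_{ki}$ for all $i$. Graphs $G_1,G_2$ on $n$ vertices are quantum isomorphic if there is a unital $C^*$-algebra $\mathcal{A}$ and a quantum permutation matrix $u\in M_n(\mathcal{A})$ with $A_{G_1}u=uA_{G_2}$, where $A_G$ is the adjacency matrix. Godsil–McKay switching: given a graph $G$ and a partition $\pi=\{C_1,\dots,C_k,D\}$ of $V(G)$ with $n_i=|C_i|$, the conditions are (i) for all $1\le i,j\le k$, any two vertices in $C_i$ have the same number of neighbours in $C_j$; (ii) each $v\in D$ has either $0$, $n_i/2$ or $n_i$ neighbours in $C_i$, for each $i$. The graph $G^{\pi,D}$ is obtained by, for each $v\in D$ and each $i$ such that $v$ has exactly $n_i/2$ neighbours in $C_i$, deleting these $n_i/2$ edges and joining $v$ instead to the other $n_i/2$ vertices of $C_i$. *)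

From HB Require Import structures.
From mathcomp Require Import all_boot all_order all_algebra.
From mathcomp Require Import Rstruct complex.
Set Implicit Arguments. Unset Strict Implicit. Unset Printing Implicit Defensive.
Import Order.TTheory GRing.Theory Num.Theory.
Local Open Scope ring_scope.

Notation RR := Rdefinitions.R.
Notation CC := (complex RR).

Record is_unital_cstar (A : algType CC) (nrm : A -> RR) (st : A -> A) : Prop := {
  cs_nrm_eq0    : forall a : A, nrm a = 0 <-> a = 0;
  cs_nrm_triangle : forall a b : A, nrm (a + b) <= nrm a + nrm b;
  cs_nrm_scale  : forall (c : CC) (a : A), nrm (c *: a) = Normc.normc c * nrm a;
  cs_nrm_submul : forall a b : A, nrm (a * b) <= nrm a * nrm b;
  cs_complete   : forall x : nat -> A,
      (forall eps : RR, 0 < eps -> exists N : nat, forall p q : nat,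
          (N <= p)%N -> (N <= q)%N -> nrm (x p - x q) < eps) ->
      exists l : A, forall eps : RR, 0 < eps -> exists N : nat, forall p : nat,
          (N <= p)%N -> nrm (x p - l) < eps;
  cs_st_add     : forall a b : A, st (a + b) = st a + st b;
  cs_st_scale   : forall (c : CC) (a : A), st (c *: a) = (c^*)%C *: st a;
  cs_st_mul     : forall a b : A, st (a * b) = st b * st a;
  cs_st_invol   : forall a : A, st (st a) = a;
  cs_cstar_id   : forall a : A, nrm (st a * a) = nrm a ^+ 2
}.

Definition quantum_perm_matrix (A : algType CC) (st : A -> A) (n : nat)
    (u : 'M[A]_n) : Prop :=
  (forall i j, st (u i j) = u i j /\ u i j * u i j = u i j) /\
  (forall i, \sum_(k < n) u i k = 1) /\
  (forall i, \sum_(k < n) u k i = 1).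

Definition simple_graph (n : nat) (e : rel 'I_n) : Prop :=
  symmetric e /\ irreflexive e.

Definition adjmx (R : pzRingType) (n : nat) (e : rel 'I_n) : 'M[R]_n :=
  \matrix_(i, j) (e i j)%:R.

Definition quantum_isomorphic (n : nat) (e1 e2 : rel 'I_n) : Prop :=
  exists (A : algType CC) (nrm : A -> RR) (st : A -> A),
    is_unital_cstar nrm st /\
    exists u : 'M[A]_n, quantum_perm_matrix st u /\
      adjmx A e1 *m u = u *m adjmx A e2.

Definition block_diagonal (A : algType CC) (n : nat) (P : {set {set 'I_n}})
    (u : 'M[A]_n) : Prop :=
  forall a b : 'I_n, pblock P a != pblock P b -> u a b = 0.

(* Cs = {C_1,...,C_k}, D : the remaining cell.  Number of neighbours of v in C. *)
Definition nbrs_in (n : nat) (e : rel 'I_n) (v : 'I_n) (C : {set 'I_n}) : nat :=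
  #|[set z in C | e v z]|.

Definition GM_cond_i (n : nat) (e : rel 'I_n) (Cs : {set {set 'I_n}}) : Prop :=
  forall Ci Cj, Ci \in Cs -> Cj \in Cs ->
    forall x y, x \in Ci -> y \in Ci -> nbrs_in e x Cj = nbrs_in e y Cj.

(* "0, n_i/2 or n_i neighbours"; n_i/2 is read as the rational n_i/2,
   i.e. the count c satisfies 2c = n_i. *)
Definition GM_cond_ii (n : nat) (e : rel 'I_n) (Cs : {set {set 'I_n}})
    (D : {set 'I_n}) : Prop :=
  forall v, v \in D -> forall C, C \in Cs ->
    nbrs_in e v C = 0%N \/ (nbrs_in e v C).*2 = #|C| \/ nbrs_in e v C = #|C|.

Definition switch_pair (n : nat) (e : rel 'I_n) (Cs : {set {set 'I_n}})
    (D : {set 'I_n}) (x y : 'I_n) : bool :=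
  (x \in D) && [exists C in Cs, (y \in C) && ((nbrs_in e x C).*2 == #|C|)].

(* G^{pi,D}: for such pairs the adjacency is complemented (the n_i/2 edges
   from v into C_i are deleted and v is joined to the other n_i/2 vertices). *)
Definition GM_switch (n : nat) (e : rel 'I_n) (Cs : {set {set 'I_n}})
    (D : {set 'I_n}) : rel 'I_n :=
  fun x y => if switch_pair e Cs D x y || switch_pair e Cs D y x
             then ~~ e x y else e x y.

From HB Require Import structures.
From mathcomp Require Import all_boot all_order all_algebra ring.
From mathcomp Require Import Rstruct complex.
Import Order.TTheory GRing.Theory Num.Theory.
Set Implicit Arguments. Unset Strict Implicit. Unset Printing Implicit Defensive.
Local Open Scope ring_scope.

(* The switched adjacency matrix is A' = A + P_D A K + K A P_D, where P_D is the
   diagonal projection onto D and K = 2 (J - I_C), J being the matrix averaging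
   over each cell C_i (entries 1/n_i on C_i x C_i) and I_C the diagonal projection
   onto the union of the C_i.  Indeed, for v in D and y in C_i the entry of
   A + P_D A K at (v, y) is a_vy + 2 d/n_i - 2 a_vy, with d the number of
   neighbours of v in C_i; by condition (ii) this is exactly the switched entry.
   Since u is block diagonal with respect to the parts V_s, which refine the cells,
   and has all row and column sums 1, its transpose commutes with P_D, J and I_C.
   The adjacency matrices being symmetric, u^T intertwines A_{G_1} and A_{G_2},
   hence also A'_{G_1} and A'_{G_2}. *)

Lemma trmx_mul_adjmx (R : pzRingType) (n : nat) (e : rel 'I_n) (u : 'M[R]_n) :
  symmetric e -> (u *m adjmx R e)^T = adjmx R e *m u^T.
Proof.
move=> esym; apply/matrixP => a b; rewrite !mxE.
by apply: eq_bigr => j _; rewrite !mxE esym (commr_nat (u b j)).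
Qed.

Lemma intertwine_adjmx_tr (R : pzRingType) (n : nat) (e1 e2 : rel 'I_n) (u : 'M[R]_n) :
  symmetric e1 -> symmetric e2 ->
  u *m adjmx R e1 = adjmx R e2 *m u -> adjmx R e1 *m u^T = u^T *m adjmx R e2.
Proof.
move=> e1sym e2sym intertwine; apply: trmx_inj.
by rewrite -trmx_mul_adjmx // trmxK intertwine trmx_mul_adjmx // trmxK.
Qed.

Lemma trmx_adjmx (R : pzRingType) (n : nat) (e : rel 'I_n) :
  symmetric e -> (adjmx R e)^T = adjmx R e.
Proof. by move=> esym; apply/matrixP => i j; rewrite !mxE esym. Qed.

Lemma map_adjmx (F : pzRingType) (A : algType F) (n : nat) (e : rel 'I_n) :
  map_mx (in_alg A) (adjmx F e) = adjmx A e.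
Proof. by apply/matrixP => i j; rewrite !mxE rmorph_nat. Qed.

Lemma quantum_perm_matrix_tr (A : algType CC) (st : A -> A) (n : nat) (u : 'M[A]_n) :
  quantum_perm_matrix st u -> quantum_perm_matrix st u^T.
Proof.
case=> proj [rows cols]; split; first by move=> i j; rewrite mxE; apply: proj.
by split=> i; under eq_bigr do rewrite mxE.
Qed.

Lemma intertwine_sandwich (R : pzRingType) (n : nat) (v X Y E1 E2 : 'M[R]_n) :
  comm_mx v X -> comm_mx v Y -> E1 *m v = v *m E2 ->
  (E1 + X *m E1 *m Y + Y *m E1 *m X) *m v = v *m (E2 + X *m E2 *m Y + Y *m E2 *m X).
Proof.
move=> vX vY E12; have sandwich Z W : comm_mx v Z -> comm_mx v W ->
    Z *m E1 *m W *m v = v *m (Z *m E2 *m W).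
  by move=> vZ vW; rewrite -!mulmxA -vW (mulmxA E1) E12 -!mulmxA mulmxA -vZ !mulmxA.
by rewrite !mulmxDl !mulmxDr E12 !sandwich.
Qed.

Section BlockMatrices.
Variables (R : pzRingType) (n : nat) (P : {set {set 'I_n}}).

Lemma sum_class_col (u : 'M[R]_n) (T : eqType) (h : {set 'I_n} -> T) t b :
  (forall a b, pblock P a != pblock P b -> u a b = 0) ->
  (forall i, \sum_(k < n) u k i = 1) ->
  \sum_(k | h (pblock P k) == t) u k b = (h (pblock P b) == t)%:R.
Proof.
move=> u_block cols.
transitivity ((h (pblock P b) == t)%:R * \sum_k u k b); last by rewrite cols mulr1.
rewrite mulr_sumr big_mkcond /=; apply: eq_bigr => k _.
have [-> | neq] := eqVneq (pblock P k) (pblock P b).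
  by case: eqP; rewrite ?mul1r ?mul0r.
by rewrite u_block // mulr0; case: ifP.
Qed.

Lemma sum_class_row (u : 'M[R]_n) (T : eqType) (h : {set 'I_n} -> T) t a :
  (forall a b, pblock P a != pblock P b -> u a b = 0) ->
  (forall i, \sum_(k < n) u i k = 1) ->
  \sum_(k | h (pblock P k) == t) u a k = (h (pblock P a) == t)%:R.
Proof.
move=> u_block rows; rewrite -(sum_class_col (u := u^T)).
- by apply: eq_bigr => k _; rewrite mxE.
- by move=> x y; rewrite eq_sym mxE; apply: u_block.
- by move=> i; under eq_bigr do rewrite mxE.
Qed.

Definition block_diag_mx (f : {set 'I_n} -> R) : 'M[R]_n :=
  diag_mx (\row_x f (pblock P x)).

Definition class_mx (T : eqType) (h : {set 'I_n} -> T) (f : T -> R) : 'M[R]_n :=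
  \matrix_(x, y) ((h (pblock P x) == h (pblock P y))%:R * f (h (pblock P x))).

Lemma trmx_class_mx (T : eqType) (h : {set 'I_n} -> T) (f : T -> R) :
  (class_mx h f)^T = class_mx h f.
Proof.
by apply/matrixP => x y; rewrite !mxE eq_sym; case: eqP => [-> | _]; rewrite ?mul0r.
Qed.

End BlockMatrices.

Section Commutation.
Variables (F : comPzRingType) (A : algType F) (n : nat) (P : {set {set 'I_n}}).
Variable u : 'M[A]_n.
Hypothesis u_block : forall a b, pblock P a != pblock P b -> u a b = 0.

Lemma comm_block_diag_mx f : comm_mx u (map_mx (in_alg A) (block_diag_mx P f)).
Proof.
apply/matrixP => a b; rewrite map_diag_mx mul_mx_diag mul_diag_mx !mxE.
have [-> | neq] := eqVneq (pblock P a) (pblock P b).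
  by rewrite mulr_algr mulr_algl.
by rewrite u_block // mulr0 mul0r.
Qed.

Hypothesis rows : forall i, \sum_(k < n) u i k = 1.
Hypothesis cols : forall i, \sum_(k < n) u k i = 1.

Lemma comm_class_mx (T : eqType) (h : {set 'I_n} -> T) f :
  comm_mx u (map_mx (in_alg A) (class_mx P h f)).
Proof.
have entry x y : map_mx (in_alg A) (class_mx P h f) x y =
    (h (pblock P x) == h (pblock P y))%:R * (f (h (pblock P x)))%:A.
  by rewrite !mxE rmorphM rmorph_nat.
apply/matrixP => a b; rewrite !mxE.
transitivity
  ((\sum_(k | h (pblock P k) == h (pblock P b)) u a k) * (f (h (pblock P b)))%:A).
  rewrite mulr_suml [RHS]big_mkcond /=; apply: eq_bigr => k _; rewrite entry.
  by case: eqP => [-> | _]; rewrite ?mul1r ?mul0r ?mulr0.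
transitivity
  ((f (h (pblock P a)))%:A * \sum_(k | h (pblock P k) == h (pblock P a)) u k b).
  rewrite sum_class_row // sum_class_col // [_ == h (pblock P a)]eq_sym.
  by case: eqP => [-> | _]; rewrite ?mulr1n ?mulr0n ?mul1r ?mulr1 ?mul0r ?mulr0.
rewrite mulr_sumr [LHS]big_mkcond /=; apply: eq_bigr => k _; rewrite entry eq_sym.
by case: eqP => [-> | _]; rewrite ?mul1r ?mul0r.
Qed.

End Commutation.

Lemma nbrs_in_eq0 (n : nat) (e : rel 'I_n) (x : 'I_n) (C : {set 'I_n}) (y : 'I_n) :
  y \in C -> nbrs_in e x C = 0%N -> e x y = false.
Proof. by move=> yC /card0_eq/(_ y); rewrite !inE yC => /negbT/negbTE. Qed.

Lemma nbrs_in_eq_card (n : nat) (e : rel 'I_n) (x : 'I_n) (C : {set 'I_n}) (y : 'I_n) :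
  y \in C -> nbrs_in e x C = #|C| -> e x y.
Proof.
move=> yC full; have sub : [set z in C | e x z] \subset C.
  by apply/subsetP => z; rewrite inE => /andP[].
by have := subset_cardP full sub y; rewrite !inE yC.
Qed.

Lemma switched_entry (F : numFieldType) (d c : nat) (b : bool) : (0 < c)%N ->
  [\/ d = 0%N /\ b = false, d.*2 = c | d = c /\ b] ->
  ((if d.*2 == c then ~~ b else b)%:R : F) = b%:R + d%:R * (2 / c%:R) - b%:R * 2.
Proof.
move=> c_gt0; have c_neq0 : (c%:R : F) != 0 by rewrite pnatr_eq0 -lt0n.
case=> [[-> ->] | dc | [-> ->]].
- by rewrite double0 eq_sym (gtn_eqF c_gt0) /=; ring.
- subst c; rewrite eqxx; move: c_neq0.
  rewrite -muln2 natrM mulf_eq0 negb_or => /andP[d_neq0 _].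
  have -> : (d%:R * (2 / (d%:R * 2)) : F) = 1 by field.
  by case: b => /=; ring.
- have -> : (c.*2 == c) = false by rewrite -addnn -{3}[c]add0n eqn_add2r gtn_eqF.
  have -> : (c%:R * (2 / c%:R) : F) = 2 by field.
  by rewrite /=; ring.
Qed.

Section GodsilMcKaySwitching.
Variables (n : nat) (P : {set {set 'I_n}}) (Q : {set {set {set 'I_n}}}).
Hypotheses (HP : partition P [set: 'I_n]) (HQ : partition Q P).

Definition cell_of (x : 'I_n) : {set {set 'I_n}} := pblock Q (pblock P x).

Lemma cell_of_mem x : cell_of x \in Q.
Proof.
case/and3P: HP => /eqP coverP _ _; case/and3P: HQ => /eqP coverQ _ _.
by rewrite pblock_mem // coverQ pblock_mem // coverP inE.
Qed.

Lemma mem_cover_cell S x : S \in Q -> (x \in cover S) = (cell_of x == S).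
Proof.
case/and3P: HP => /eqP coverP trivP _; case/and3P: HQ => /eqP coverQ trivQ _.
move=> SQ; apply/bigcupP/eqP => [[B BS xB] | <-].
  have BP : B \in P by rewrite -coverQ; apply/bigcupP; exists S.
  by rewrite /cell_of (def_pblock trivP BP xB) (def_pblock trivQ SQ BS).
exists (pblock P x); last by rewrite mem_pblock coverP inE.
by rewrite mem_pblock coverQ pblock_mem // coverP inE.
Qed.

Lemma mem_cover_cell_of x : x \in cover (cell_of x).
Proof. by rewrite mem_cover_cell ?cell_of_mem. Qed.

Lemma card_cover_cell_of_gt0 x : (0 < #|cover (cell_of x)|)%N.
Proof. by apply/card_gt0P; exists x; apply: mem_cover_cell_of. Qed.

Lemma sum_adj_cell (R : pzSemiRingType) (e : rel 'I_n) x S : S \in Q ->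
  \sum_(j | cell_of j == S) ((e x j)%:R : R) = (nbrs_in e x (cover S))%:R.
Proof.
move=> SQ; rewrite /nbrs_in -sum1_card natr_sum [LHS]big_mkcond [RHS]big_mkcond /=.
by apply: eq_bigr => j _; rewrite !inE mem_cover_cell //; case: eqP; case: e.
Qed.

Variable SD : {set {set 'I_n}}.
Hypothesis HSD : SD \in Q.
Local Notation Cs := [set cover S | S in Q :\ SD].

Lemma cover_cell_of_in_cells y : cell_of y != SD -> cover (cell_of y) \in Cs.
Proof.
by move=> yD; apply/imsetP; exists (cell_of y); rewrite // !inE yD cell_of_mem.
Qed.

Lemma switch_pairE e x y : switch_pair e Cs (cover SD) x y =
  [&& cell_of x == SD, cell_of y != SD &
      (nbrs_in e x (cover (cell_of y))).*2 == #|cover (cell_of y)|].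
Proof.
rewrite /switch_pair mem_cover_cell //; have [_ | _] // := eqVneq (cell_of x) SD.
rewrite !andTb; apply/existsP/andP => [[C /and3P[CS yS half]] | [yD half]].
  case/imsetP: CS yS half => S; rewrite !inE => /andP[SnD SQ] ->.
  by rewrite mem_cover_cell // => /eqP -> ->.
exists (cover (cell_of y)).
by rewrite cover_cell_of_in_cells // mem_cover_cell_of half.
Qed.

Variable F : numFieldType.

Definition D_proj : 'M[F]_n := block_diag_mx P (fun B => (pblock Q B == SD)%:R).

Definition switch_correction : 'M[F]_n :=
  class_mx P (pblock Q) (fun S => if S == SD then 0 else 2 / #|cover S|%:R)
  - block_diag_mx P (fun B => if pblock Q B == SD then 0 else 2).

Lemma trmx_switch_correction : switch_correction^T = switch_correction.
Proof. by rewrite /switch_correction raddfB /= trmx_class_mx tr_diag_mx. Qed.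

Variable e : rel 'I_n.
Hypothesis esym : symmetric e.
Hypothesis GMii : GM_cond_ii e Cs (cover SD).

Lemma nbrs_in_cell_cases x y : cell_of x = SD -> cell_of y != SD ->
  [\/ nbrs_in e x (cover (cell_of y)) = 0%N /\ e x y = false,
      (nbrs_in e x (cover (cell_of y))).*2 = #|cover (cell_of y)|
    | nbrs_in e x (cover (cell_of y)) = #|cover (cell_of y)| /\ e x y].
Proof.
move=> xD yD; have y_cell := mem_cover_cell_of y.
have x_in_D : x \in cover SD by rewrite mem_cover_cell // xD.
case: (GMii x_in_D (cover_cell_of_in_cells yD)) => [d0 | [half | full]].
- by constructor 1; split => //; apply: nbrs_in_eq0 y_cell d0.
- by constructor 2.
- by constructor 3; split => //; apply: nbrs_in_eq_card y_cell full.
Qed.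

Lemma adj_class_mxE (f : {set {set 'I_n}} -> F) x y :
  (adjmx F e *m class_mx P (pblock Q) f) x y =
  (nbrs_in e x (cover (cell_of y)))%:R * f (cell_of y).
Proof.
rewrite mxE -sum_adj_cell ?cell_of_mem // mulr_suml [RHS]big_mkcond /=.
apply: eq_bigr => j _; rewrite !mxE -/(cell_of j) -/(cell_of y).
by case: eqP => [-> | _]; rewrite ?mulr1n ?mul1r ?mul0r ?mulr0.
Qed.

Lemma D_adj_switch_correctionE : D_proj *m adjmx F e *m switch_correction =
  \matrix_(x, y) if (cell_of x == SD) && (cell_of y != SD) then
    (nbrs_in e x (cover (cell_of y)))%:R * (2 / #|cover (cell_of y)|%:R)
      - (e x y)%:R * 2
  else 0.
Proof.
apply/matrixP => x y; rewrite -mulmxA mul_diag_mx /switch_correction mulmxBr mul_mx_diag.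
rewrite mxE [in X in _ * X]mxE adj_class_mxE !mxE -/(cell_of x) -/(cell_of y).
case: eqP => _; rewrite ?mul0r // mul1r.
by case: eqP => _; rewrite ?mulr0 ?subr0.
Qed.

Lemma adjmx_GM_switch : adjmx F (GM_switch e Cs (cover SD)) =
  adjmx F e + D_proj *m adjmx F e *m switch_correction
    + switch_correction *m adjmx F e *m D_proj.
Proof.
have -> : switch_correction *m adjmx F e *m D_proj =
    (D_proj *m adjmx F e *m switch_correction)^T.
  by rewrite !trmx_mul trmx_switch_correction trmx_adjmx // tr_diag_mx mulmxA.
rewrite D_adj_switch_correctionE; apply/matrixP => x y.
rewrite !mxE /GM_switch !switch_pairE.
have [xD | xD] := eqVneq (cell_of x) SD; have [yD | yD] := eqVneq (cell_of y) SD;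
  rewrite /= ?orbF ?addr0 //.
- rewrite addrA; apply: (@switched_entry F _ _ (e x y)).
    exact: card_cover_cell_of_gt0.
  exact: nbrs_in_cell_cases.
- rewrite (esym x y) addrA; apply: (@switched_entry F _ _ (e y x)).
    exact: card_cover_cell_of_gt0.
  exact: nbrs_in_cell_cases.
Qed.

End GodsilMcKaySwitching.

Theorem theorem4p3 (n : nat) (e1 e2 : rel 'I_n)
    (He1 : simple_graph e1) (He2 : simple_graph e2)
    (P : {set {set 'I_n}}) (HP : partition P [set: 'I_n])
    (Q : {set {set {set 'I_n}}}) (HQ : partition Q P)
    (SD : {set {set 'I_n}}) (HSD : SD \in Q)
    (Hu : exists (A : algType CC) (nrm : A -> RR) (st : A -> A),
        is_unital_cstar nrm st /\
        exists u : 'M[A]_n, [/\ quantum_perm_matrix st u,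
          u *m adjmx A e1 = adjmx A e2 *m u & block_diagonal P u])
    (GMi1 : GM_cond_i e1 [set cover S | S in Q :\ SD])
    (GMii1 : GM_cond_ii e1 [set cover S | S in Q :\ SD] (cover SD))
    (GMi2 : GM_cond_i e2 [set cover S | S in Q :\ SD])
    (GMii2 : GM_cond_ii e2 [set cover S | S in Q :\ SD] (cover SD)) :
  quantum_isomorphic
    (GM_switch e1 [set cover S | S in Q :\ SD] (cover SD))
    (GM_switch e2 [set cover S | S in Q :\ SD] (cover SD)).
Proof.
(* Condition (i) is needed for cospectrality, not for this matrix identity. *)
case: Hu => A [nrm [st [cstar [u [qpm intertwine u_block]]]]].
have [[e1sym _] [e2sym _]] := (He1, He2).
have [_ [rows cols]] := qpm.
exists A, nrm, st; split=> //; exists u^T; split; first exact: quantum_perm_matrix_tr.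
have uT_block a b : pblock P a != pblock P b -> u^T a b = 0.
  by rewrite mxE eq_sym; apply: u_block.
have comm_D : comm_mx u^T (map_mx (in_alg A) (D_proj P Q SD CC)).
  exact: comm_block_diag_mx.
have comm_K : comm_mx u^T (map_mx (in_alg A) (switch_correction P Q SD CC)).
  rewrite map_mxB; apply: comm_mxB; last exact: comm_block_diag_mx.
  by apply: comm_class_mx => // i; under eq_bigr do rewrite mxE.
rewrite -!(map_adjmx A) (adjmx_GM_switch HP HQ HSD _ e1sym GMii1).
rewrite (adjmx_GM_switch HP HQ HSD _ e2sym GMii2) 4!map_mxD !map_mxM !map_adjmx.
by apply: intertwine_sandwich => //; apply: intertwine_adjmx_tr.
Qed.
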